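(* For any $\alpha>0$, $\nu>-1$ and $x>0$, $$0<\frac{L_{\nu+1}^{\alpha-1}(-x)}{L_{\nu}^{\alpha}(-x)}<\frac{\alpha+x+\sqrt{(\alpha+x)^2+4(\nu+1)x}}{2(\nu+1)} .$$
   Context: $L_\nu^\alpha$ denotes the Laguerre function $L_\nu^\alpha(x)=\dfrac{\Gamma(\nu+\alpha+1)}{\Gamma(\nu+1)\Gamma(\alpha+1)}\,{}_1F_1(-\nu;\alpha+1;x)$, which reduces to the generalized Laguerre polynomial when $\nu$ is a nonnegative integer. *)

From Stdlib Require Import Reals.
From Coquelicot Require Import Coquelicot.
Open Scope R_scope.

Definition Gamma (s : R) : R :=
  RInt_gen (fun t => Rpower t (s - 1) * exp (- t)) (at_right 0) (Rbar_locally p_infty).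

Fixpoint poch (a : R) (k : nat) : R :=
  match k with
  | O => 1
  | S k' => poch a k' * (a + INR k')
  end.

Definition hyp1F1 (a b z : R) : R :=
  Series (fun k => poch a k / (poch b k * INR (Factorial.fact k)) * z ^ k).

Definition Laguerre (nu alpha x : R) : R :=
  Gamma (nu + alpha + 1) / (Gamma (nu + 1) * Gamma (alpha + 1))
  * hyp1F1 (- nu) (alpha + 1) x.

From Stdlib Require Import Reals.
From Coquelicot Require Import Coquelicot.
From Stdlib Require Import Lra Lia Factorial.
From Stdlib Require Classical_Prop.
Open Scope R_scope.

(* Both Laguerre functions are reduced, using [Gamma (s + 1) = s Gamma s] and Kummer's
   transformation [1F1(a; b; -x) = e^(-x) 1F1(b - a; b; x)], to series with positive terms:
   the ratio is [y / (nu + 1)] with [y = alpha F(alpha) / F(alpha + 1)] and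
   [F(b) = 1F1(alpha + nu + 1; b; x)]. Let [w_k] be the terms of [F(alpha + 1)] and
   [M_i = sum_k k^i w_k]. Then [F(alpha) = M_0 + M_1 / alpha], the term recurrence gives
   [M_2 + alpha M_1 = x ((alpha + nu + 1) M_0 + M_1)], and Cauchy-Schwarz [M_1^2 < M_0 M_2]
   becomes [y^2 - (alpha + x) y - (nu + 1) x < 0]: y lies below the positive root. *)


(** * Hypergeometric series and Kummer's transformation *)

Lemma poch_pos a k : 0 < a -> 0 < poch a k.
Proof.
  intros Ha; induction k as [|k IH]; simpl; [lra|].
  apply Rmult_lt_0_compat; [exact IH|]. pose proof (pos_INR k); lra.
Qed.

Lemma poch_succ_shift a k : poch a (S k) = a * poch (a + 1) k.
Proof.
  induction k as [|k IH]; [simpl; ring|].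
  change (poch a (S (S k)) = a * (poch (a + 1) k * (a + 1 + INR k))).
  change (poch a (S k) * (a + INR (S k)) = a * (poch (a + 1) k * (a + 1 + INR k))).
  rewrite IH, S_INR. ring.
Qed.

Lemma INR_fact_pos k : 0 < INR (fact k).
Proof. apply lt_0_INR, lt_O_fact. Qed.

Definition hyp_coef (a b : R) (k : nat) : R := poch a k / (poch b k * INR (fact k)).

Definition hyp_term (a b x : R) (k : nat) : R := hyp_coef a b k * x ^ k.

Lemma hyp_coef_pos a b k : 0 < a -> 0 < b -> 0 < hyp_coef a b k.
Proof.
  intros Ha Hb. apply Rdiv_lt_0_compat; [apply poch_pos; lra|].
  apply Rmult_lt_0_compat; [apply poch_pos; lra| apply INR_fact_pos].
Qed.

Lemma hyp_term_pos a b x k : 0 < a -> 0 < b -> 0 < x -> 0 < hyp_term a b x k.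
Proof. intros. apply Rmult_lt_0_compat; [apply hyp_coef_pos; lra|apply pow_lt; lra]. Qed.

Lemma hyp_term_succ a b x k : 0 < b ->
  hyp_term a b x (S k) = hyp_term a b x k * (a + INR k) * x / ((b + INR k) * (INR k + 1)).
Proof.
  intros Hb. unfold hyp_term, hyp_coef. simpl poch. rewrite fact_simpl, mult_INR, S_INR. simpl pow.
  pose proof (poch_pos b k Hb). pose proof (INR_fact_pos k). pose proof (pos_INR k).
  field. repeat split; lra.
Qed.

Lemma hyp_coef_lower_succ a b k : 0 < b ->
  hyp_coef a b k = hyp_coef a (b + 1) k * (b + INR k) / b.
Proof.
  intros Hb. unfold hyp_coef.
  pose proof (poch_succ_shift b k) as Hs. simpl poch in Hs.
  pose proof (poch_pos (b + 1) k ltac:(lra)). pose proof (poch_pos b k Hb).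
  pose proof (INR_fact_pos k). pose proof (pos_INR k).
  assert (E : poch b k = b * poch (b + 1) k / (b + INR k)) by (field_simplify_eq; lra).
  rewrite E. field. repeat split; lra.
Qed.

Definition kummer_conv (a b : R) (n : nat) : R :=
  sum_f_R0 (fun k => hyp_coef a b k * ((-1) ^ (n - k) / INR (fact (n - k)))) n.

Lemma kummer_conv_succ a b n : 0 < b ->
  INR (S n) * kummer_conv a b (S n) = - kummer_conv a b n + a / b * kummer_conv (a + 1) (b + 1) n.
Proof.
  intros Hb. unfold kummer_conv. rewrite scal_sum.
  (* Split [S n = k + (S n - k)]: [k hyp_coef a b k] is [a / b] times the shifted coefficient,
     and [m (-1)^m / m!] is minus the previous exponential coefficient. *)
  rewrite (sum_eq _ (fun k => INR k * hyp_coef a b k * ((-1) ^ (S n - k) / INR (fact (S n - k)))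
      + hyp_coef a b k * (INR (S n - k) * ((-1) ^ (S n - k) / INR (fact (S n - k)))))).
  2:{ intros k Hk. rewrite minus_INR by lia. ring. }
  rewrite sum_plus.
  assert (Hlow : sum_f_R0 (fun k => INR k * hyp_coef a b k *
                   ((-1) ^ (S n - k) / INR (fact (S n - k)))) (S n)
      = a / b * sum_f_R0 (fun k => hyp_coef (a + 1) (b + 1) k *
                   ((-1) ^ (n - k) / INR (fact (n - k)))) n).
  { rewrite decomp_sum by lia. simpl pred. simpl (INR 0).
    rewrite !Rmult_0_l, Rplus_0_l, scal_sum.
    apply sum_eq. intros i Hi. replace (S n - S i)%nat with (n - i)%nat by lia.
    unfold hyp_coef. rewrite !poch_succ_shift, fact_simpl, mult_INR, S_INR.
    pose proof (INR_fact_pos i). pose proof (poch_pos (b + 1) i ltac:(lra)).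
    pose proof (pos_INR i). pose proof (INR_fact_pos (n - i)). field. repeat split; lra. }
  assert (Hhigh : sum_f_R0 (fun k => hyp_coef a b k *
                   (INR (S n - k) * ((-1) ^ (S n - k) / INR (fact (S n - k))))) (S n)
      = - sum_f_R0 (fun k => hyp_coef a b k * ((-1) ^ (n - k) / INR (fact (n - k)))) n).
  { rewrite tech5. replace (S n - S n)%nat with 0%nat by lia. simpl (INR 0).
    rewrite Rmult_0_l, Rmult_0_r, Rplus_0_r.
    match goal with |- _ = - ?S => replace (- S) with (-1 * S) by ring end.
    rewrite scal_sum.
    apply sum_eq. intros i Hi. replace (S n - i)%nat with (S (n - i)) by lia.
    rewrite fact_simpl, mult_INR, S_INR. simpl pow.
    pose proof (INR_fact_pos (n - i)). pose proof (pos_INR (n - i)).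
    field. lra. }
  rewrite Hlow, Hhigh. ring.
Qed.

Lemma kummer_conv_closed n : forall a b, 0 < b ->
  kummer_conv a b n = (-1) ^ n * hyp_coef (b - a) b n.
Proof.
  induction n as [|n IH]; intros a b Hb.
  - unfold kummer_conv, hyp_coef. simpl. field.
  - assert (Hn : 0 < INR (S n)) by (apply lt_0_INR; lia).
    apply (Rmult_eq_reg_l (INR (S n))); [|lra].
    rewrite kummer_conv_succ, (IH a b Hb), (IH (a + 1) (b + 1)) by lra.
    replace (b + 1 - (a + 1)) with (b - a) by ring.
    rewrite (hyp_coef_lower_succ _ b n Hb), (hyp_coef_lower_succ _ b (S n) Hb).
    unfold hyp_coef. simpl poch. rewrite fact_simpl, mult_INR, S_INR. simpl pow.
    pose proof (INR_fact_pos n). pose proof (poch_pos (b + 1) n ltac:(lra)).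
    pose proof (pos_INR n). field. repeat split; lra.
Qed.

Lemma is_lim_seq_div_succ M : is_lim_seq (fun k => M / (INR k + 1)) 0.
Proof.
  assert (H : is_lim_seq (fun k => INR (S k)) p_infty).
  { apply (is_lim_seq_incr_1 INR). apply is_lim_seq_INR. }
  apply is_lim_seq_inv in H; [|discriminate].
  apply (is_lim_seq_scal_l _ M) in H. simpl in H.
  replace (Finite 0) with (Rbar_mult M 0) by (simpl; f_equal; ring).
  eapply is_lim_seq_ext; [|exact H]. intros k. rewrite <- S_INR. reflexivity.
Qed.

Lemma ex_series_ratio_div_succ (d : nat -> R) M :
  (forall k, 0 < d k) -> (forall k, d (S k) <= M / (INR k + 1) * d k) -> ex_series d.
Proof.
  intros Hpos Hratio. apply ex_series_Rabs, (ex_series_DAlembert d 0); [lra| |].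
  - intros n. specialize (Hpos n). lra.
  - apply (is_lim_seq_le_le (fun _ => 0) _ (fun k => M / (INR k + 1)));
      [|apply is_lim_seq_const|apply is_lim_seq_div_succ].
    intros n. split; [apply Rabs_pos|].
    pose proof (Hpos (S n)). pose proof (Hpos n).
    rewrite Rabs_pos_eq by (apply Rlt_le, Rdiv_lt_0_compat; lra).
    apply (Rmult_le_reg_r (d n)); [lra|].
    unfold Rdiv at 1. rewrite Rmult_assoc, Rinv_l, Rmult_1_r by lra. apply Hratio.
Qed.

Section HypergeometricSeries.
Variables a b x : R.
Hypotheses (Ha : 0 < a) (Hb : 0 < b) (Hx : 0 < x).

Lemma ex_series_hyp_term_weighted i :
  ex_series (fun k => (INR k + 1) ^ i * hyp_term a b x k).
Proof.
  apply (ex_series_ratio_div_succ _ (2 ^ i * (a / b + 1) * x)).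
  - intros k. pose proof (pos_INR k). pose proof (hyp_term_pos a b x k Ha Hb Hx).
    apply Rmult_lt_0_compat; [apply pow_lt|]; lra.
  - intros k. rewrite hyp_term_succ, S_INR by exact Hb.
    pose proof (pos_INR k) as HK. pose proof (hyp_term_pos a b x k Ha Hb Hx) as Hw.
    set (K := INR k) in *. set (w := hyp_term a b x k) in *.
    assert (Hpow : (K + 1 + 1) ^ i <= 2 ^ i * (K + 1) ^ i).
    { rewrite <- Rpow_mult_distr. apply pow_incr. lra. }
    assert (Hfrac : (a + K) / (b + K) <= a / b + 1).
    { apply (Rmult_le_reg_r (b * (b + K))); [nra|].
      field_simplify; [nra|lra|lra]. }
    replace ((K + 1 + 1) ^ i * (w * (a + K) * x / ((b + K) * (K + 1))))
      with ((K + 1 + 1) ^ i * (w * x) * ((a + K) / (b + K)) * / (K + 1)) by (field; lra).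
    replace (2 ^ i * (a / b + 1) * x / (K + 1) * ((K + 1) ^ i * w))
      with (2 ^ i * (K + 1) ^ i * (w * x) * (a / b + 1) * / (K + 1)) by (field; lra).
    apply Rmult_le_compat_r; [apply Rlt_le, Rinv_0_lt_compat; lra|].
    apply Rmult_le_compat; [| |apply Rmult_le_compat_r; nra|exact Hfrac].
    + apply Rmult_le_pos; [apply pow_le|]; nra.
    + apply Rlt_le, Rdiv_lt_0_compat; lra.
Qed.

Lemma ex_series_hyp_moment i : ex_series (fun k => INR k ^ i * hyp_term a b x k).
Proof.
  refine (ex_series_le _ _ _ (ex_series_hyp_term_weighted i)). intros k.
  pose proof (pos_INR k). pose proof (hyp_term_pos a b x k Ha Hb Hx).
  change (norm ?z) with (Rabs z). rewrite Rabs_pos_eq.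
  - apply Rmult_le_compat_r; [lra|]. apply pow_incr. lra.
  - apply Rmult_le_pos; [apply pow_le|]; lra.
Qed.

Lemma ex_series_hyp_term : ex_series (hyp_term a b x).
Proof.
  eapply ex_series_ext; [|apply (ex_series_hyp_moment 0)]. intros k. simpl. ring.
Qed.

End HypergeometricSeries.

Lemma is_series_exp y : is_series (fun n => y ^ n / INR (fact n)) (exp y).
Proof.
  eapply is_series_ext; [|apply is_exp_Reals]. intros n. rewrite pow_n_pow. reflexivity.
Qed.

Lemma hyp1F1_kummer a b x : 0 < b -> 0 < b - a -> 0 < x ->
  hyp1F1 a b (- x) = exp (- x) * Series (hyp_term (b - a) b x).
Proof.
  intros Hb Hc Hx.
  assert (Habs_hyp : ex_series (fun n => Rabs (hyp_term (b - a) b x n))).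
  { eapply ex_series_ext; [|apply (ex_series_hyp_term (b - a) b x Hc Hb Hx)]. intros n.
    rewrite Rabs_pos_eq; [reflexivity|]. apply Rlt_le, hyp_term_pos; lra. }
  assert (Habs_exp : ex_series (fun n => Rabs ((- x) ^ n / INR (fact n)))).
  { exists (exp x). eapply is_series_ext; [|apply (is_series_exp x)]. intros n.
    unfold Rdiv. rewrite Rabs_mult, Rabs_inv, <- RPow_abs, Rabs_Ropp.
    rewrite (Rabs_pos_eq x), (Rabs_pos_eq (INR _)); [reflexivity|apply pos_INR|lra]. }
  pose proof (is_series_mult _ _ _ _ (Series_correct _ (ex_series_hyp_term _ _ _ Hc Hb Hx))
    (is_series_exp (- x)) Habs_hyp Habs_exp) as Hprod.
  unfold hyp1F1. rewrite Rmult_comm. apply is_series_unique.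
  eapply is_series_ext; [|exact Hprod]. intros n. cbv beta.
  transitivity (x ^ n * kummer_conv (b - a) b n).
  - unfold kummer_conv. rewrite scal_sum. apply sum_eq. intros k Hk.
    unfold hyp_term. replace (- x) with (-1 * x) by ring. rewrite Rpow_mult_distr.
    replace (x ^ n) with (x ^ k * x ^ (n - k)) by (rewrite <- pow_add; f_equal; lia).
    pose proof (INR_fact_pos (n - k)). field. lra.
  - rewrite kummer_conv_closed by exact Hb. replace (b - (b - a)) with a by ring.
    replace (- x) with (-1 * x) by ring. rewrite Rpow_mult_distr.
    match goal with |- ?A = ?B => change (@eq R A B) end. unfold hyp_coef. ring.
Qed.

(** * A quadratic inequality for a ratio of hypergeometric series *)

Lemma is_series_gt0 (u : nat -> R) l :
  (forall k, 0 <= u k) -> 0 < u 0%nat + u 1%nat -> is_series u l -> 0 < l.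
Proof.
  intros Hu H01 Hl.
  assert (Hpartial : sum_f_R0 u 1 <= l).
  { apply sum_incr; [|exact Hu]. apply is_lim_seq_Reals.
    eapply is_lim_seq_ext; [intros N; apply sum_n_Reals|]. exact Hl. }
  simpl in Hpartial. lra.
Qed.

Lemma is_series_pos (u : nat -> R) l : (forall k, 0 < u k) -> is_series u l -> 0 < l.
Proof.
  intros Hu. apply is_series_gt0; [intros k; apply Rlt_le, Hu|].
  pose proof (Hu 0%nat). pose proof (Hu 1%nat). lra.
Qed.

Lemma Series_hyp_term_pos a b x : 0 < a -> 0 < b -> 0 < x -> 0 < Series (hyp_term a b x).
Proof.
  intros Ha Hb Hx. apply (is_series_pos (hyp_term a b x)).
  - intros k. apply hyp_term_pos; assumption.
  - apply Series_correct, ex_series_hyp_term; assumption.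
Qed.

(* The variance [sum_k w_k (k - m)^2] with [m = S1 / S0] is positive since [w_0, w_1 > 0]. *)
Lemma series_moments_cauchy_schwarz (w : nat -> R) (S0 S1 S2 : R) :
  (forall k, 0 < w k) -> is_series w S0 -> is_series (fun k => INR k * w k) S1 ->
  is_series (fun k => INR k ^ 2 * w k) S2 -> S1 ^ 2 < S0 * S2.
Proof.
  intros Hw H0 H1 H2.
  assert (HS0 : 0 < S0) by exact (is_series_pos w S0 Hw H0).
  set (m := S1 / S0).
  assert (Hvar : is_series (fun k => w k * (INR k - m) ^ 2) (S2 - 2 * m * S1 + m ^ 2 * S0)).
  { pose proof (is_series_plus _ _ _ _ (is_series_minus _ _ _ _ H2 (is_series_scal (2 * m) _ _ H1))
      (is_series_scal (m ^ 2) _ _ H0)) as H.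
    eapply is_series_ext; [|exact H]. intros k.
    unfold plus, minus, opp, scal; simpl; unfold mult; simpl. ring. }
  apply is_series_gt0 in Hvar.
  - replace (S2 - 2 * m * S1 + m ^ 2 * S0) with (S2 - S1 ^ 2 / S0) in Hvar
      by (unfold m; field; lra).
    apply (Rmult_lt_compat_l S0) in Hvar; [|exact HS0].
    replace (S0 * (S2 - S1 ^ 2 / S0)) with (S0 * S2 - S1 ^ 2) in Hvar by (field; lra).
    lra.
  - intros k. pose proof (Hw k). apply Rmult_le_pos; [lra|apply pow2_ge_0].
  - pose proof (Hw 0%nat). pose proof (Hw 1%nat). simpl INR.
    pose proof (pow2_ge_0 (0 - m)). pose proof (pow2_ge_0 (1 - m)).
    destruct (Req_dec m 0) as [-> | Hm].
    + replace ((1 - 0) ^ 2) with 1 by ring. nra.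
    + pose proof (Rsqr_pos_lt m Hm). unfold Rsqr in *. nra.
Qed.

Definition hyp_moment (a b x : R) (i : nat) : R := Series (fun k => INR k ^ i * hyp_term a b x k).

Section HypergeometricRatio.
Variables a b x : R.
Hypotheses (Ha : 0 < a) (Hb : 0 < b) (Hx : 0 < x).

Let is_series_moment i :
  is_series (fun k => INR k ^ i * hyp_term a (b + 1) x k) (hyp_moment a (b + 1) x i).
Proof. apply Series_correct, ex_series_hyp_moment; lra. Qed.

Lemma Series_hyp_term_lower_pred :
  Series (hyp_term a b x) = hyp_moment a (b + 1) x 0 + hyp_moment a (b + 1) x 1 / b.
Proof.
  apply is_series_unique.
  pose proof (is_series_plus _ _ _ _ (is_series_moment 0)
    (is_series_scal (/ b) _ _ (is_series_moment 1))) as H.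
  replace (hyp_moment a (b + 1) x 0 + hyp_moment a (b + 1) x 1 / b)
    with (plus (hyp_moment a (b + 1) x 0) (scal (/ b) (hyp_moment a (b + 1) x 1)))
    by (unfold plus, scal; simpl; unfold mult; simpl; unfold Rdiv; ring).
  eapply is_series_ext; [|exact H]. intros k.
  unfold hyp_term. rewrite (hyp_coef_lower_succ a b k Hb).
  unfold plus, scal; simpl; unfold mult; simpl. field. lra.
Qed.

(* Summed form of the term recurrence [k (k + b) w_k = x (a + k - 1) w_(k-1)]. *)
Lemma hyp_moment_recurrence :
  hyp_moment a (b + 1) x 2 + b * hyp_moment a (b + 1) x 1
  = x * (a * hyp_moment a (b + 1) x 0 + hyp_moment a (b + 1) x 1).
Proof.
  set (w := hyp_term a (b + 1) x).
  set (v := fun k => INR k * (INR k + b) * w k).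
  assert (Hleft : is_series v
    (hyp_moment a (b + 1) x 2 + b * hyp_moment a (b + 1) x 1)).
  { pose proof (is_series_plus _ _ _ _ (is_series_moment 2)
      (is_series_scal b _ _ (is_series_moment 1))) as H.
    eapply is_series_ext; [|exact H]. intros k. unfold v, w.
    unfold plus, scal; simpl; unfold mult; simpl. ring. }
  assert (Hright : is_series v
    (x * (a * hyp_moment a (b + 1) x 0 + hyp_moment a (b + 1) x 1))).
  { apply is_series_decr_1.
    pose proof (is_series_scal x _ _ (is_series_plus _ _ _ _
      (is_series_scal a _ _ (is_series_moment 0)) (is_series_moment 1))) as H.
    replace (_ + - _) with (scal x (plus (scal a (hyp_moment a (b + 1) x 0))
      (hyp_moment a (b + 1) x 1)))
      by (unfold v, plus, opp, scal; simpl; unfold mult; simpl; ring).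
    eapply is_series_ext; [|exact H]. intros k. unfold v, w.
    rewrite hyp_term_succ, S_INR by lra. pose proof (pos_INR k).
    unfold plus, scal; simpl; unfold mult; simpl. field. lra. }
  rewrite <- (is_series_unique _ _ Hleft). apply is_series_unique, Hright.
Qed.

Lemma hyp_ratio_quadratic_lt (y := b * Series (hyp_term a b x) / Series (hyp_term a (b + 1) x)) :
  y ^ 2 - (b + x) * y - (a - b) * x < 0.
Proof.
  set (M := hyp_moment a (b + 1) x).
  assert (HM0 : 0 < M 0%nat).
  { refine (is_series_pos _ _ _ (is_series_moment 0)). intros k.
    rewrite pow_O, Rmult_1_l. apply hyp_term_pos; lra. }
  assert (Hcs : M 1%nat ^ 2 < M 0%nat * M 2%nat).
  { apply (series_moments_cauchy_schwarz (hyp_term a (b + 1) x)).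
    - intros k. apply hyp_term_pos; lra.
    - eapply is_series_ext; [|exact (is_series_moment 0)]. intros k. simpl. ring.
    - eapply is_series_ext; [|exact (is_series_moment 1)]. intros k. simpl. ring.
    - exact (is_series_moment 2). }
  assert (HM2 : M 2%nat = x * (a * M 0%nat + M 1%nat) - b * M 1%nat)
    by (pose proof hyp_moment_recurrence as Hrec; fold M in Hrec; lra).
  assert (Hy : y = b + M 1%nat / M 0%nat).
  { unfold y. rewrite Series_hyp_term_lower_pred.
    replace (Series (hyp_term a (b + 1) x)) with (M 0%nat).
    - fold M. field. lra.
    - apply Series_ext. intros k. simpl. ring. }
  replace (y ^ 2 - (b + x) * y - (a - b) * x)
    with ((M 1%nat ^ 2 - M 0%nat * M 2%nat) / M 0%nat ^ 2) by (rewrite Hy, HM2; field; lra).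
  apply Rdiv_neg_pos; nra.
Qed.

End HypergeometricRatio.

(** * The Gamma function *)

Section ImproperIntegralOfNonneg.
Variable f : R -> R.
Hypothesis f_cont : forall t, 0 < t -> continuous f t.
Hypothesis f_ge0 : forall t, 0 < t -> 0 <= f t.

Lemma ex_RInt_pos a b : 0 < a -> a <= b -> ex_RInt f a b.
Proof.
  intros Ha Hab. apply (@ex_RInt_continuous R_CompleteNormedModule). intros z Hz.
  rewrite Rmin_left in Hz by lra. apply f_cont. lra.
Qed.

Lemma RInt_Chasles_pos a b c : 0 < a -> a <= b -> b <= c ->
  RInt f a c = RInt f a b + RInt f b c.
Proof. intros. rewrite <- (RInt_Chasles f a b c); [reflexivity| |]; apply ex_RInt_pos; lra. Qed.

Lemma RInt_le_widen a' a b b' : 0 < a' -> a' <= a -> a <= b -> b <= b' ->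
  RInt f a b <= RInt f a' b'.
Proof.
  intros. rewrite (RInt_Chasles_pos a' a b'), (RInt_Chasles_pos a b b') by lra.
  assert (0 <= RInt f a' a) by (apply RInt_ge_0; [lra|apply ex_RInt_pos; lra|intros; apply f_ge0; lra]).
  assert (0 <= RInt f b b') by (apply RInt_ge_0; [lra|apply ex_RInt_pos; lra|intros; apply f_ge0; lra]).
  lra.
Qed.

(* The improper integral is the supremum of the integrals over compact subintervals. *)
Lemma is_RInt_gen_of_bounded B :
  (forall a b, 0 < a -> a <= 1 -> 1 <= b -> RInt f a b <= B) ->
  exists L, is_RInt_gen f (at_right 0) (Rbar_locally p_infty) L /\ RInt f 1 2 <= L.
Proof.
  intros HB.
  set (E := fun r => exists a b, 0 < a /\ a <= b /\ r = RInt f a b).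
  assert (Hbd : bound E).
  { exists B. intros r [a [b [Ha [Hab ->]]]].
    eapply Rle_trans; [apply (RInt_le_widen (Rmin a 1) a b (Rmax b 1))|].
    - apply Rmin_pos; lra.
    - apply Rmin_l.
    - lra.
    - apply Rmax_l.
    - apply HB; [apply Rmin_pos; lra|apply Rmin_r|apply Rmax_r]. }
  assert (Hne : exists r, E r) by (exists (RInt f 1 2), 1, 2; repeat split; lra).
  destruct (completeness E Hbd Hne) as [L [HL_ub HL_least]].
  exists L. split; [|apply HL_ub; exists 1, 2; repeat split; lra].
  apply filterlimi_locally. intros eps.
  assert (Hnear : exists a0 b0, 0 < a0 /\ a0 <= b0 /\ L - eps < RInt f a0 b0).
  { apply Classical_Prop.NNPP. intros Hn.
    assert (Hub : is_upper_bound E (L - eps)).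
    { intros r [a [b [Ha [Hab ->]]]]. apply Rnot_lt_le. intros Hlt. apply Hn.
      exists a, b. auto. }
    specialize (HL_least _ Hub). destruct eps as [e He]. simpl in HL_least. lra. }
  destruct Hnear as [a0 [b0 [Ha0 [Hab0 Hlt]]]].
  apply (Filter_prod _ _ _ (fun a => 0 < a < a0) (fun b => b0 < b)).
  - exists (mkposreal a0 Ha0). intros y Hy Hy0. split; [exact Hy0|].
    unfold ball in Hy; simpl in Hy. unfold AbsRing_ball, abs, minus, plus, opp in Hy; simpl in Hy.
    rewrite Rabs_pos_eq in Hy by lra. lra.
  - exists b0. auto.
  - intros a b Ha Hb. simpl. exists (RInt f a b). split.
    + apply (@RInt_correct R_CompleteNormedModule), ex_RInt_pos; lra.
    + assert (RInt f a0 b0 <= RInt f a b) by (apply RInt_le_widen; lra).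
      assert (RInt f a b <= L) by (apply HL_ub; exists a, b; repeat split; lra).
      unfold ball; simpl. unfold AbsRing_ball, abs, minus, plus, opp; simpl.
      rewrite Rabs_left1 by lra. lra.
Qed.

End ImproperIntegralOfNonneg.

Lemma filter_prod_pos_segment (P : R -> Prop) : (forall t, 0 < t -> P t) ->
  filter_prod (at_right 0) (Rbar_locally p_infty)
    (fun ab => forall t, Rmin (fst ab) (snd ab) <= t <= Rmax (fst ab) (snd ab) -> P t).
Proof.
  intros HP. apply (Filter_prod _ _ _ (fun a => 0 < a) (fun b => 0 < b)).
  - exists (mkposreal 1 Rlt_0_1). intros; auto.
  - exists 0. auto.
  - intros a b Ha Hb t [Ht _]. apply HP. simpl in Ht.
    eapply Rlt_le_trans; [|exact Ht]. apply Rmin_glb_lt; auto.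
Qed.

Lemma exp_le_compat x y : x <= y -> exp x <= exp y.
Proof.
  intros H. destruct (Rle_lt_or_eq_dec x y H) as [Hlt|<-]; [|lra].
  apply Rlt_le, exp_increasing, Hlt.
Qed.

(* From [ln u <= u - 1] at [u = t / (2 p)]. *)
Lemma mul_ln_le p t : 0 < p -> 0 < t -> p * ln t <= t / 2 + p * (ln (2 * p) - 1).
Proof.
  intros Hp Ht. pose proof (exp_ineq1_le (ln (t / (2 * p)))) as H.
  rewrite exp_ln in H by (apply Rdiv_lt_0_compat; lra).
  rewrite ln_div in H by lra.
  assert (H2 : p * (ln t - ln (2 * p)) <= p * (t / (2 * p) - 1)) by (apply Rmult_le_compat_l; lra).
  replace (p * (t / (2 * p) - 1)) with (t / 2 - p) in H2 by (field; lra). lra.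
Qed.

Definition gamma_integrand (s t : R) : R := Rpower t (s - 1) * exp (- t).

Lemma gamma_integrand_pos s t : 0 < gamma_integrand s t.
Proof. apply Rmult_lt_0_compat; apply exp_pos. Qed.

Lemma gamma_integrand_continuous s t : 0 < t -> continuous (gamma_integrand s) t.
Proof.
  intros Ht. apply (@ex_derive_continuous R_AbsRing R_NormedModule).
  unfold gamma_integrand, Rpower. auto_derive. lra.
Qed.

Lemma exp_mul_ln_pred s t : 0 < t -> exp ((s - 1) * ln t) = exp (s * ln t) / t.
Proof.
  intros Ht. replace ((s - 1) * ln t) with (s * ln t + - ln t) by ring.
  rewrite exp_plus, exp_Ropp, exp_ln by lra. reflexivity.
Qed.

Lemma is_RInt_Rpower_pred s a b : 0 < s -> 0 < a -> a <= b ->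
  is_RInt (fun t => Rpower t (s - 1)) a b (Rpower b s / s - Rpower a s / s).
Proof.
  intros Hs Ha Hab.
  apply (@is_RInt_derive R_CompleteNormedModule (fun t => Rpower t s / s)).
  - intros t Ht. rewrite Rmin_left in Ht by lra. unfold Rpower.
    auto_derive; [lra|]. rewrite exp_mul_ln_pred by lra. field. split; lra.
  - intros t Ht. rewrite Rmin_left in Ht by lra.
    apply (@ex_derive_continuous R_AbsRing R_NormedModule). unfold Rpower. auto_derive. lra.
Qed.

Lemma RInt_gamma_integrand_head_le s a : 0 < s -> 0 < a -> a <= 1 ->
  RInt (gamma_integrand s) a 1 <= 1 / s.
Proof.
  intros Hs Ha Ha1.
  pose proof (is_RInt_Rpower_pred s a 1 Hs Ha Ha1) as HI.
  eapply Rle_trans; [apply (RInt_le _ (fun t => Rpower t (s - 1)))|].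
  - exact Ha1.
  - apply ex_RInt_pos; [intros; apply gamma_integrand_continuous; lra|lra|lra].
  - eexists. exact HI.
  - intros t Ht. unfold gamma_integrand. rewrite <- (Rmult_1_r (Rpower t (s - 1))) at 2.
    apply Rmult_le_compat_l; [apply Rlt_le, exp_pos|].
    rewrite <- exp_0. apply exp_le_compat. lra.
  - rewrite (is_RInt_unique _ _ _ _ HI). unfold Rpower. rewrite ln_1, Rmult_0_r, exp_0.
    pose proof (exp_pos (s * ln a)). unfold Rdiv.
    assert (0 < / s) by (apply Rinv_0_lt_compat; lra). nra.
Qed.

Definition gamma_tail_const (s : R) : R :=
  let p := Rabs (s - 1) + 1 in exp (p * (ln (2 * p) - 1)).

Lemma gamma_integrand_tail_le s t : 1 <= t ->
  gamma_integrand s t <= gamma_tail_const s * exp (- t / 2).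
Proof.
  intros Ht. unfold gamma_integrand, gamma_tail_const, Rpower. rewrite <- !exp_plus.
  apply exp_le_compat. set (p := Rabs (s - 1) + 1).
  assert (Hp : 0 < p) by (unfold p; pose proof (Rabs_pos (s - 1)); lra).
  assert (Hln : 0 <= ln t) by (rewrite <- ln_1; apply ln_le; lra).
  assert (Hsp : s - 1 <= p) by (unfold p; pose proof (Rle_abs (s - 1)); lra).
  pose proof (mul_ln_le p t Hp ltac:(lra)). nra.
Qed.

Lemma RInt_gamma_integrand_tail_le s b : 1 <= b ->
  RInt (gamma_integrand s) 1 b <= 2 * gamma_tail_const s.
Proof.
  intros Hb. set (K := gamma_tail_const s).
  assert (HK : 0 < K) by apply exp_pos.
  assert (HI : is_RInt (fun t => K * exp (- t / 2)) 1 b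
      (- 2 * K * exp (- b / 2) - - 2 * K * exp (- 1 / 2))).
  { apply (@is_RInt_derive R_CompleteNormedModule (fun t => - 2 * K * exp (- t / 2))).
    - intros t _. auto_derive; [auto|].
      match goal with |- ?A = ?B => change (@eq R A B) end. unfold Rdiv. field.
    - intros t _. apply (@ex_derive_continuous R_AbsRing R_NormedModule). auto_derive. auto. }
  eapply Rle_trans; [apply (RInt_le _ (fun t => K * exp (- t / 2)))|].
  - exact Hb.
  - apply ex_RInt_pos; [intros; apply gamma_integrand_continuous; lra|lra|lra].
  - eexists. exact HI.
  - intros t Ht. apply gamma_integrand_tail_le. lra.
  - rewrite (is_RInt_unique _ _ _ _ HI).
    assert (0 <= K * exp (- b / 2)) by (apply Rmult_le_pos; [lra|apply Rlt_le, exp_pos]).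
    assert (K * exp (- 1 / 2) <= K * 1).
    { apply Rmult_le_compat_l; [lra|]. rewrite <- exp_0. apply exp_le_compat. lra. }
    lra.
Qed.

Lemma is_RInt_gen_Gamma s : 0 < s ->
  is_RInt_gen (gamma_integrand s) (at_right 0) (Rbar_locally p_infty) (Gamma s) /\ 0 < Gamma s.
Proof.
  intros Hs.
  assert (Hcont : forall t, 0 < t -> continuous (gamma_integrand s) t)
    by (intros; apply gamma_integrand_continuous; auto).
  assert (Hge0 : forall t, 0 < t -> 0 <= gamma_integrand s t)
    by (intros; apply Rlt_le, gamma_integrand_pos).
  destruct (is_RInt_gen_of_bounded _ Hcont Hge0 (1 / s + 2 * gamma_tail_const s))
    as [L [HL H12]].
  - intros a b Ha Ha1 Hb. rewrite (RInt_Chasles_pos _ Hcont a 1 b) by lra.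
    pose proof (RInt_gamma_integrand_head_le s a Hs Ha Ha1).
    pose proof (RInt_gamma_integrand_tail_le s b Hb). lra.
  - assert (HG : Gamma s = L).
    { unfold Gamma. apply (@is_RInt_gen_unique R_CompleteNormedModule); try exact _. exact HL. }
    assert (0 < RInt (gamma_integrand s) 1 2).
    { apply RInt_gt_0; [lra| intros; apply gamma_integrand_pos| intros; apply Hcont; lra]. }
    rewrite HG. split; [exact HL|lra].
Qed.

Definition gamma_primitive (s t : R) : R := exp (s * ln t) * exp (- t).

Lemma is_derive_gamma_primitive s t : 0 < t ->
  is_derive (gamma_primitive s) t (s * gamma_integrand s t - gamma_integrand (s + 1) t).
Proof.
  intros Ht. unfold gamma_primitive. auto_derive; [lra|].
  unfold gamma_integrand, Rpower. replace (s + 1 - 1) with s by ring.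
  rewrite exp_mul_ln_pred by lra.
  match goal with |- ?A = ?B => change (@eq R A B) end. field. lra.
Qed.

Lemma Derive_gamma_primitive_continuous s t : 0 < t -> continuous (Derive (gamma_primitive s)) t.
Proof.
  intros Ht.
  apply (continuous_ext_loc _ (fun u => s * gamma_integrand s u - gamma_integrand (s + 1) u)).
  - assert (Ht2 : 0 < t / 2) by lra. exists (mkposreal _ Ht2). intros u Hu.
    unfold ball in Hu; simpl in Hu. unfold AbsRing_ball, abs, minus, plus, opp in Hu; simpl in Hu.
    apply Rabs_def2 in Hu.
    symmetry. apply is_derive_unique, is_derive_gamma_primitive. lra.
  - apply (@ex_derive_continuous R_AbsRing R_NormedModule). unfold gamma_integrand, Rpower.
    auto_derive. lra.
Qed.

Lemma gamma_primitive_lim_0 s : 0 < s -> filterlim (gamma_primitive s) (at_right 0) (locally 0).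
Proof.
  intros Hs. apply filterlim_locally. intros [eps He]. simpl.
  exists (mkposreal (exp (ln eps / s)) (exp_pos _)). intros t Ht Ht0. simpl in Ht.
  unfold ball in Ht |- *; simpl in Ht |- *.
  unfold AbsRing_ball, abs, minus, plus, opp in Ht |- *; simpl in Ht |- *.
  rewrite Ropp_0, Rplus_0_r in Ht |- *. rewrite Rabs_pos_eq in Ht by lra.
  rewrite Rabs_pos_eq by (apply Rmult_le_pos; apply Rlt_le, exp_pos).
  assert (Hln : ln t < ln eps / s).
  { rewrite <- (ln_exp (ln eps / s)). apply ln_increasing; auto. }
  assert (Hsln : s * ln t < ln eps).
  { apply (Rmult_lt_compat_l s) in Hln; auto.
    replace (s * (ln eps / s)) with (ln eps) in Hln by (field; lra). exact Hln. }
  unfold gamma_primitive. rewrite <- exp_plus, <- (exp_ln eps) by lra.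
  apply exp_increasing. lra.
Qed.

Lemma gamma_primitive_lim_p_infty s : 0 < s ->
  filterlim (gamma_primitive s) (Rbar_locally p_infty) (locally 0).
Proof.
  intros Hs. apply filterlim_locally. intros [eps He]. simpl.
  exists (Rmax 1 (2 * (s * (ln (2 * s) - 1) - ln eps))). intros t Ht.
  assert (Ht1 : 1 < t) by (eapply Rle_lt_trans; [apply Rmax_l|exact Ht]).
  assert (Ht2 : 2 * (s * (ln (2 * s) - 1) - ln eps) < t)
    by (eapply Rle_lt_trans; [apply Rmax_r|exact Ht]).
  unfold ball; simpl. unfold AbsRing_ball, abs, minus, plus, opp; simpl.
  rewrite Ropp_0, Rplus_0_r.
  rewrite Rabs_pos_eq by (apply Rmult_le_pos; apply Rlt_le, exp_pos).
  pose proof (mul_ln_le s t Hs ltac:(lra)).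
  unfold gamma_primitive. rewrite <- exp_plus, <- (exp_ln eps) by lra.
  apply exp_increasing. lra.
Qed.

(* Integration by parts against [t^s e^(-t)], which vanishes at both ends. *)
Lemma Gamma_succ s : 0 < s -> Gamma (s + 1) = s * Gamma s.
Proof.
  intros Hs. destruct (is_RInt_gen_Gamma s Hs) as [HG _].
  assert (HD : is_RInt_gen (Derive (gamma_primitive s)) (at_right 0) (Rbar_locally p_infty) (0 - 0)).
  { apply is_RInt_gen_Derive.
    - apply filter_prod_pos_segment. intros t Ht.
      eexists. apply is_derive_gamma_primitive, Ht.
    - apply filter_prod_pos_segment, Derive_gamma_primitive_continuous.
    - apply gamma_primitive_lim_0, Hs.
    - apply gamma_primitive_lim_p_infty, Hs. }
  pose proof (is_RInt_gen_minus _ _ _ _ (is_RInt_gen_scal _ s _ HG) HD) as H.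
  assert (Hsucc : is_RInt_gen (gamma_integrand (s + 1)) (at_right 0) (Rbar_locally p_infty)
      (s * Gamma s)).
  { replace (s * Gamma s) with (minus (scal s (Gamma s)) (0 - 0))
      by (unfold minus, plus, opp, scal; simpl; unfold mult; simpl; ring).
    eapply is_RInt_gen_ext; [|exact H].
    eapply filter_imp; [|apply (filter_prod_pos_segment (fun t =>
      minus (scal s (gamma_integrand s t)) (Derive (gamma_primitive s) t)
      = gamma_integrand (s + 1) t))].
    - intros [a b] Hab t Ht. apply Hab. simpl in *. lra.
    - intros t Ht. rewrite (is_derive_unique _ _ _ (is_derive_gamma_primitive s t Ht)).
      unfold minus, plus, opp, scal; simpl; unfold mult; simpl. ring. }
  unfold Gamma at 1. apply (@is_RInt_gen_unique R_CompleteNormedModule); try exact _. exact Hsucc.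
Qed.

(** * Laguerre functions *)

Lemma lt_quadratic_root y p q : y ^ 2 - p * y - q < 0 -> y < (p + sqrt (p ^ 2 + 4 * q)) / 2.
Proof.
  intros Hy.
  assert (Hroot : 2 * y - p < sqrt (p ^ 2 + 4 * q)).
  { destruct (Rlt_or_le (2 * y - p) 0) as [Hneg|Hnn].
    - pose proof (sqrt_pos (p ^ 2 + 4 * q)). lra.
    - rewrite <- (sqrt_pow2 (2 * y - p)) by lra.
      apply sqrt_lt_1_alt. split; nra. }
  lra.
Qed.

Lemma Laguerre_ratio_hyp_series alpha nu x : 0 < alpha -> -1 < nu -> 0 < x ->
  Laguerre (nu + 1) (alpha - 1) (- x) / Laguerre nu alpha (- x)
  = alpha * Series (hyp_term (alpha + nu + 1) alpha x)
    / Series (hyp_term (alpha + nu + 1) (alpha + 1) x) / (nu + 1).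
Proof.
  intros Ha Hn Hx. unfold Laguerre.
  replace (nu + 1 + (alpha - 1) + 1) with (nu + alpha + 1) by ring.
  replace (alpha - 1 + 1) with alpha by ring.
  rewrite (Gamma_succ (nu + 1)), (Gamma_succ alpha) by lra.
  rewrite (hyp1F1_kummer (- (nu + 1)) alpha x), (hyp1F1_kummer (- nu) (alpha + 1) x) by lra.
  replace (alpha - - (nu + 1)) with (alpha + nu + 1) by ring.
  replace (alpha + 1 - - nu) with (alpha + nu + 1) by ring.
  destruct (is_RInt_gen_Gamma (nu + alpha + 1)) as [_ G1]; [lra|].
  destruct (is_RInt_gen_Gamma (nu + 1)) as [_ G2]; [lra|].
  destruct (is_RInt_gen_Gamma alpha) as [_ G3]; [lra|].
  assert (Hg : 0 < Series (hyp_term (alpha + nu + 1) (alpha + 1) x))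
    by (apply Series_hyp_term_pos; lra).
  pose proof (exp_pos (- x)). field. repeat split; lra.
Qed.

Theorem theorem18 (alpha nu x : R) :
  0 < alpha -> -1 < nu -> 0 < x ->
  0 < Laguerre (nu + 1) (alpha - 1) (- x) / Laguerre nu alpha (- x) /\
  Laguerre (nu + 1) (alpha - 1) (- x) / Laguerre nu alpha (- x) <
    (alpha + x + sqrt ((alpha + x) ^ 2 + 4 * (nu + 1) * x)) / (2 * (nu + 1)).
Proof.
  intros Ha Hn Hx. rewrite Laguerre_ratio_hyp_series by assumption.
  pose proof (hyp_ratio_quadratic_lt (alpha + nu + 1) alpha x ltac:(lra) Ha Hx) as Hquad.
  set (y := alpha * _ / _) in *.
  assert (Hy : 0 < y).
  { apply Rdiv_lt_0_compat; [apply Rmult_lt_0_compat|]; try apply Series_hyp_term_pos; lra. }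
  replace ((alpha + nu + 1 - alpha) * x) with ((nu + 1) * x) in Hquad by ring.
  apply lt_quadratic_root in Hquad. rewrite <- Rmult_assoc in Hquad.
  split; [apply Rdiv_lt_0_compat; lra|].
  replace (_ / (2 * (nu + 1))) with ((alpha + x + sqrt ((alpha + x) ^ 2 + 4 * (nu + 1) * x)) / 2
    / (nu + 1)) by (field; lra).
  apply Rmult_lt_compat_r; [apply Rinv_0_lt_compat; lra|exact Hquad].
Qed.
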